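(* For any commutative Noetherian ring $R$ with unity, $\Gamma_E(R)$ is not a cycle graph.
   Context: For $x,y\in R$ write $x\sim y$ iff $\operatorname{ann}(x)=\operatorname{ann}(y)$; $[x]$ denotes the equivalence class of $x$. Let $Z^*(R)$ be the set of nonzero zero divisors of $R$. The graph $\Gamma_E(R)$ is the simple graph whose vertices are the classes $[x]$ with $x\in Z^*(R)$, two distinct vertices $[x],[y]$ being adjacent iff $xy=0$. A cycle graph is an $n$-gon, $n\ge 3$: a graph on vertices $v_1,\dots,v_n$ whose only edges are $v_iv_{i+1}$ ($1\le i<n$) and $v_nv_1$. *)

From HB Require Import structures.
From mathcomp Require Import all_boot all_order all_algebra.
Set Implicit Arguments. Unset Strict Implicit. Unset Printing Implicit Defensive.
Import GRing.Theory.
Local Open Scope ring_scope.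

Definition is_ideal (R : comPzRingType) (I : R -> Prop) : Prop :=
  I 0 /\ (forall x y, I x -> I y -> I (x - y)) /\ (forall r x, I x -> I (r * x)).

Definition noetherian (R : comPzRingType) : Prop :=
  forall I : nat -> (R -> Prop),
    (forall n, is_ideal (I n)) ->
    (forall n x, I n x -> I n.+1 x) ->
    exists N, forall n, (N <= n)%N -> forall x, I n x -> I N x.

Definition ann (R : comPzRingType) (x : R) : R -> Prop := fun y => x * y = 0.

Definition eclass (R : comPzRingType) (x : R) : R -> Prop := fun y => ann y = ann x.

Definition zdiv_star (R : comPzRingType) (x : R) : Prop :=
  x != 0 /\ exists y : R, y != 0 /\ x * y = 0.

Definition GammaE_vertex (R : comPzRingType) (C : R -> Prop) : Prop :=
  exists x, zdiv_star x /\ C = eclass x.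

Definition GammaE_adj (R : comPzRingType) (C D : R -> Prop) : Prop :=
  C <> D /\ exists x y : R, C = eclass x /\ D = eclass y /\ x * y = 0.

Definition cycle_adj (n : nat) (i j : 'I_n) : Prop :=
  (val j = (val i).+1 %% n)%N \/ (val i = (val j).+1 %% n)%N.

Definition is_cycle_graph (T : Type) (V : T -> Prop) (E : T -> T -> Prop) : Prop :=
  exists n : nat, (3 <= n)%N /\
  exists f : 'I_n -> T,
    injective f /\ (forall i, V (f i)) /\ (forall v, V v -> exists i, f i = v) /\
    (forall i j, E (f i) (f j) <-> cycle_adj i j).

From HB Require Import structures.
From mathcomp Require Import all_boot all_order all_algebra.
From Stdlib Require Import ClassicalEpsilon FunctionalExtensionality PropExtensionality.
Set Implicit Arguments. Unset Strict Implicit. Unset Printing Implicit Defensive.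
Import GRing.Theory.

(* The cycle is finite, so some vertex [m] has an annihilator that is maximal
   among annihilators of nonzero elements.  If m * y <> 0 then ann y is
   contained in ann m, so every vertex not adjacent to [m] has all its
   neighbours among those of [m]; in a 2-regular graph this leaves only the
   triangle and the square.  In the triangle [m], [a], [b] maximality forces
   a^2 <> 0 and b^2 <> 0, and then a + b is a zero divisor whose class is none
   of the three.  In the square m - a - w - b - m, where we may take ann a
   maximal as well, maximality forces m^2 = a^2 = 0, and then m + a is a zero
   divisor whose class is none of the four. *)

Section Annihilators.
Local Open Scope ring_scope.
Variable R : comPzRingType.
Implicit Types u v x a b w z : R.

Definition ann_sub u v := forall y, u * y = 0 -> v * y = 0.

Definition ann_max u := forall z, z != 0 -> ann_sub u z -> ann z = ann u.

Definition covers_zdiv (s : seq R) :=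
  forall z, zdiv_star z -> exists2 c, c \in s & ann z = ann c.

Lemma ann_mul0 u v y : ann u = ann v -> (u * y = 0) = (v * y = 0).
Proof. by move/(congr1 (@^~ y)). Qed.

Lemma eq_ann u v : ann_sub u v -> ann_sub v u -> ann u = ann v.
Proof.
move=> uv vu; apply: functional_extensionality => y.
by apply: propositional_extensionality; split=> [/uv|/vu].
Qed.

Lemma eclass_ann u v : eclass u = eclass v -> ann u = ann v.
Proof. by move=> E; have : eclass v u by rewrite -E. Qed.

Lemma GammaE_adjE u v : GammaE_adj (eclass u) (eclass v) <-> ann u <> ann v /\ u * v = 0.
Proof.
split=> [[neq_uv [u' [v' [Eu [Ev u'v']]]]] | [neq_uv uv]].
  split; first by move=> E; apply: neq_uv; rewrite /eclass E.
  have {}Eu := eclass_ann Eu; have {}Ev := eclass_ann Ev.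
  by rewrite mulrC (ann_mul0 u Ev) mulrC (ann_mul0 v' Eu).
by split; [move=> E; apply: neq_uv; apply: eclass_ann | exists u, v].
Qed.

Lemma ann_subM u v : ann_sub u (u * v).
Proof. by move=> y uy; rewrite mulrAC uy mul0r. Qed.

Lemma ann_max_subM u v : ann_max u -> u * v != 0 -> ann_sub v u.
Proof.
move=> Mu uv0 y vy; rewrite -(ann_mul0 y (Mu _ uv0 (@ann_subM u v))).
by rewrite -mulrA vy mulr0.
Qed.

Lemma annN u : ann (- u) = ann u.
Proof.
apply: eq_ann => y; first by rewrite mulNr => /eqP; rewrite oppr_eq0 => /eqP.
by rewrite mulNr => ->; rewrite oppr0.
Qed.

Lemma addr_neq0_ann u v : ann u <> ann v -> u + v != 0.
Proof. by move=> uv; apply: contra_notN uv; rewrite addr_eq0 => /eqP ->; rewrite annN. Qed.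

Lemma ann_max_eq x a : ann_max x -> x != 0 -> a != 0 ->
  (forall z, zdiv_star z -> a * z = 0) -> ann a = ann x.
Proof.
move=> Mx x0 a0 az; apply: Mx a0 _ => p xp.
have [-> | p0] := eqVneq p 0; first by rewrite mulr0.
by apply: az; split => //; exists x; rewrite mulrC.
Qed.

Lemma covers_zdiv_sub s t : {subset s <= t} -> covers_zdiv s -> covers_zdiv t.
Proof. by move=> st cov z /cov [c /st]; exists c. Qed.

Lemma covers_zdiv_annihilator s a : covers_zdiv s -> {in s, forall c, c * a = 0} ->
  forall z, zdiv_star z -> a * z = 0.
Proof. by move=> cov sa z /cov [c /sa ca E]; rewrite mulrC (ann_mul0 a E). Qed.

Lemma triangle_sqr_neq0 x a b : ann_max x -> x != 0 -> a != 0 ->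
  covers_zdiv [:: x; a; b] -> x * a = 0 -> a * b = 0 -> ann a <> ann x -> a * a != 0.
Proof.
move=> Mx x0 a0 cov xa ab ax; apply/eqP => aa; apply: ax.
apply: ann_max_eq Mx x0 a0 (covers_zdiv_annihilator cov _) => c.
by rewrite !inE => /or3P [] /eqP ->; rewrite ?xa ?aa // mulrC.
Qed.

Lemma no_zdiv_triangle x a b : ann_max x -> x != 0 -> a != 0 -> b != 0 ->
  covers_zdiv [:: x; a; b] -> x * a = 0 -> x * b = 0 -> a * b = 0 ->
  ann a <> ann x -> ann b <> ann x -> ann b <> ann a -> False.
Proof.
move=> Mx x0 a0 b0 cov xa xb ab ax bx ba.
have /eqP aa := triangle_sqr_neq0 Mx x0 a0 cov xa ab ax.
have /eqP bb : b * b != 0.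
  apply: (triangle_sqr_neq0 (b := a)) Mx x0 b0 _ xb _ bx; last by rewrite mulrC.
  by apply: covers_zdiv_sub cov => c; rewrite !inE => /or3P [] ->; rewrite ?orbT.
have zab : zdiv_star (a + b).
  split; first by apply: addr_neq0_ann => /esym.
  by exists x; split => //; rewrite mulrC mulrDr xa xb addr0.
have [c] := cov _ zab; rewrite !inE => /or3P [] /eqP -> E.
- by move: (xa); rewrite -(ann_mul0 a E) mulrDl (mulrC b) ab addr0.
- by move: (ab); rewrite -(ann_mul0 b E) mulrDl ab add0r.
- by move: (ab); rewrite mulrC -(ann_mul0 a E) mulrDl (mulrC b) ab addr0.
Qed.

Lemma square_cycle_sqr_eq0 x a b w : ann_max x -> a != 0 -> w != 0 ->
  covers_zdiv [:: x; a; b; w] -> x * a = 0 -> x * b = 0 -> a * w = 0 -> b * w = 0 ->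
  a * b != 0 -> x * w != 0 -> ann w <> ann x -> x * x = 0.
Proof.
move=> Mx a0 w0 cov xa xb aw bw /eqP ab /eqP xw wx.
have [// | /eqP xx] := eqVneq (x * x) 0; case: wx; apply: Mx w0 _ => p xp.
(* Otherwise w * p would annihilate x, a and b, which no vertex class does. *)
have [// | wp0] := eqVneq (w * p) 0; exfalso.
have wpx : w * p * x = 0 by rewrite -mulrA (mulrC p) xp mulr0.
have wpa : w * p * a = 0 by rewrite mulrAC (mulrC w) aw mul0r.
have wpb : w * p * b = 0 by rewrite mulrAC (mulrC w) bw mul0r.
have [c] := cov (w * p) (conj wp0 (ex_intro _ a (conj a0 wpa))).
rewrite !inE => /or4P [] /eqP -> E.
- by apply: xx; rewrite -(ann_mul0 x E).
- by apply: ab; rewrite -(ann_mul0 b E).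
- by apply: ab; rewrite mulrC -(ann_mul0 a E).
- by apply: xw; rewrite mulrC -(ann_mul0 x E).
Qed.

Lemma no_zdiv_square_cycle x a b w : ann_max x -> ann_max a ->
  x != 0 -> a != 0 -> b != 0 -> w != 0 -> covers_zdiv [:: x; a; b; w] ->
  x * a = 0 -> x * b = 0 -> a * w = 0 -> b * w = 0 -> a * b != 0 -> x * w != 0 ->
  ann w <> ann x -> ann b <> ann a -> ann a <> ann x -> False.
Proof.
move=> Mx Ma x0 a0 b0 w0 cov xa xb aw bw ab xw wx ba ax.
have xx := square_cycle_sqr_eq0 Mx a0 w0 cov xa xb aw bw ab xw wx.
have aa : a * a = 0.
  apply: (square_cycle_sqr_eq0 (b := w)) Ma x0 b0 _ _ aw xb _ xw ab ba.
  - by apply: covers_zdiv_sub cov => c; rewrite !inE => /or4P [] ->; rewrite ?orbT.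
  - by rewrite mulrC.
  - by rewrite mulrC.
have zxa : zdiv_star (x + a).
  split; first by apply: addr_neq0_ann => /esym.
  by exists x; split => //; rewrite mulrDl xx mulrC xa addr0.
have [c] := cov _ zxa; rewrite !inE => /or4P [] /eqP -> E.
- apply: ax; apply: Mx a0 _ => y xy.
  by move: (xy); rewrite -(ann_mul0 y E) mulrDl xy add0r.
- apply: ax; apply/esym; apply: Ma x0 _ => y ay.
  by move: (ay); rewrite -(ann_mul0 y E) mulrDl ay addr0.
- by apply: (negP ab); apply/eqP; rewrite mulrC -(ann_mul0 a E) mulrDl xa aa addr0.
- by apply: (negP xw); apply/eqP; rewrite mulrC -(ann_mul0 x E) mulrDl xx (mulrC a) xa addr0.
Qed.
End Annihilators.

Lemma finite_preorder_max (T : finType) (le : T -> T -> Prop) :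
  (forall i, le i i) -> (forall i j k, le i j -> le j k -> le i k) ->
  forall i, exists2 k, le i k & forall j, le k j -> le j k.
Proof.
move=> le_refl le_trans i.
pose leb u v : bool := if excluded_middle_informative (le u v) then true else false.
have lebP u v : reflect (le u v) (leb u v).
  by rewrite /leb; case: excluded_middle_informative => h; constructor.
pose down v := [set u | leb u v].
have /lebP ii := le_refl i.
have [k /lebP ik kmax] := arg_maxnP (fun v => #|down v|) ii.
exists k => // j kj.
have sub_kj : down k \subset down j.
  by apply/subsetP => u; rewrite !inE => /lebP uk; apply/lebP; apply: le_trans uk kj.
have /eqP down_kj : down k == down j.
  by rewrite eqEcard sub_kj; apply: kmax; apply/lebP; apply: le_trans ik kj.
have : j \in down j by rewrite inE; apply/lebP.
by rewrite -down_kj inE => /lebP.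
Qed.

Section TwoRegularGraph.
Variables (V : finType) (adj : rel V).
Hypotheses (adj_sym : symmetric adj) (adj_irr : irreflexive adj).

Definition nbrs v := [set u | adj v u].

Lemma in_nbrs v u : (u \in nbrs v) = adj v u.
Proof. by rewrite inE. Qed.

Hypothesis card_nbrs : forall v, #|nbrs v| = 2.

Lemma nbrs_eq2 v j k : j != k -> adj v j -> adj v k -> nbrs v = [set j; k].
Proof.
move=> jk vj vk; apply/esym/eqP; rewrite eqEcard cards2 jk card_nbrs leqnn andbT.
by apply/subsetP => u; rewrite !inE => /orP [] /eqP ->.
Qed.

Lemma adj_neq u v : adj u v -> u != v.
Proof. by apply: contraTneq => ->; rewrite adj_irr. Qed.

Variables m a b : V.
Hypothesis nbrs_m : nbrs m = [set a; b].
Hypothesis dominated : forall u, u != m -> ~~ adj m u -> nbrs u \subset nbrs m.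

Lemma nbrs_outside u : u \notin [:: m; a; b] -> nbrs u = [set a; b].
Proof.
rewrite !inE !negb_or => /and3P [um ua ub].
have mu : ~~ adj m u by rewrite -in_nbrs nbrs_m !inE negb_or ua.
by apply/eqP; rewrite eqEcard -nbrs_m dominated // !card_nbrs.
Qed.

Lemma dominated_two_regular :
  (forall u, u \in [:: m; a; b]) /\ adj a b \/
  exists w, (forall u, u \in [:: m; a; b; w]) /\
    [/\ adj a w, adj b w, ~~ adj a b, ~~ adj m w & w != m].
Proof.
have ma : adj m a by rewrite -in_nbrs nbrs_m !inE eqxx.
have mb : adj m b by rewrite -in_nbrs nbrs_m !inE eqxx orbT.
have [w /= w_out | all_in] := pickP [pred u | u \notin [:: m; a; b]]; [right | left].
- have nbrs_w := nbrs_outside w_out.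
  have aw : adj a w by rewrite adj_sym -in_nbrs nbrs_w !inE eqxx.
  have bw : adj b w by rewrite adj_sym -in_nbrs nbrs_w !inE eqxx orbT.
  have wm : w != m by move: w_out; rewrite !inE !negb_or => /and3P [].
  have nbrs_a : nbrs a = [set m; w].
    by apply: nbrs_eq2 => //; [rewrite eq_sym | rewrite adj_sym].
  exists w; split.
  + move=> u; have [|/nbrs_outside nbrs_u] := boolP (u \in [:: m; a; b]).
      by rewrite !inE => /or3P [] ->; rewrite ?orbT.
    have : u \in nbrs a by rewrite in_nbrs adj_sym -in_nbrs nbrs_u !inE eqxx.
    by rewrite nbrs_a !inE => /orP [] ->; rewrite ?orbT.
  + split => //.
      by rewrite -in_nbrs nbrs_a !inE negb_or eq_sym (adj_neq mb) (adj_neq bw).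
    by rewrite -in_nbrs nbrs_m !inE negb_or eq_sym (adj_neq aw) eq_sym (adj_neq bw).
- have in_mab u : u \in [:: m; a; b] by apply/negbFE; exact: all_in.
  split => //.
  have nbrs_a : nbrs a = [set m; b].
    apply/eqP; rewrite eqEcard cards2 card_nbrs ltnS leq_b1 andbT.
    apply/subsetP => u; rewrite in_nbrs => au; move: (in_mab u).
    by rewrite !inE [u == a]eq_sym (negbTE (adj_neq au)) orFb.
  by rewrite -in_nbrs nbrs_a !inE eqxx orbT.
Qed.
End TwoRegularGraph.

Lemma ordS_neq_ord_pred n (i : 'I_n) : (2 < n)%N -> ordS i != ord_pred i.
Proof.
move=> n_gt2; apply: contraTneq n_gt2 => /(congr1 (@ordS n)); rewrite ord_predK.
move=> /(congr1 val) /=; rewrite -addn1 modnDml addn1 -addn2 -{2}(modn_small (ltn_ord i)).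
rewrite -{2}[val i]addn0 => /eqP; rewrite eqn_modDl mod0n => /eqP.
by case: n {i} => [|[|[|n]]].
Qed.

Lemma cycle_adjE n (i j : 'I_n) : cycle_adj i j <-> j = ordS i \/ j = ord_pred i.
Proof.
split=> [[ji | ij] | [-> | ->]].
- by left; apply: val_inj.
- by right; rewrite -[j]ordSK; congr ord_pred; apply: val_inj.
- by left.
- by right; rewrite -[in LHS](ord_predK i).
Qed.

Lemma card_nbrs_cycle n (adj : rel 'I_n) : (2 < n)%N ->
  (forall i j, cycle_adj i j <-> adj i j) -> forall i, #|nbrs adj i| = 2.
Proof.
move=> n_gt2 adjE i; have -> : nbrs adj i = [set ordS i; ord_pred i].
  apply/setP => j; rewrite !inE; apply/idP/orP.
    by move/adjE/cycle_adjE => [] ->; [left | right].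
  by move=> ij; apply/adjE/cycle_adjE; case: ij => /eqP; [left | right].
by rewrite cards2 ordS_neq_ord_pred.
Qed.

Section AnnihilatorClasses.
Local Open Scope ring_scope.
Variables (R : comPzRingType) (V : finType) (x : V -> R).
Hypothesis x_zdiv : forall i, zdiv_star (x i).
Hypothesis x_cover : forall z, zdiv_star z -> exists i, ann z = ann (x i).
Hypothesis x_ann_inj : forall i j, ann (x i) = ann (x j) -> i = j.

Definition zdiv_adj : rel V := fun i j => (i != j) && (x i * x j == 0).

Lemma zdiv_adj_sym : symmetric zdiv_adj.
Proof. by move=> i j; rewrite /zdiv_adj eq_sym mulrC. Qed.

Lemma zdiv_adj_irr : irreflexive zdiv_adj.
Proof. by move=> i; rewrite /zdiv_adj eqxx. Qed.

Lemma zdiv_adj_mul0 i j : zdiv_adj i j -> x i * x j = 0.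
Proof. by case/andP => _ /eqP. Qed.

Lemma not_zdiv_adj_mul i j : i != j -> ~~ zdiv_adj i j -> x i * x j != 0.
Proof. by move=> ij; rewrite /zdiv_adj ij. Qed.

Lemma x_neq0 i : x i != 0.
Proof. by case: (x_zdiv i). Qed.

Lemma ann_x_neq i j : i != j -> ann (x i) <> ann (x j).
Proof. by move=> /eqP ij /x_ann_inj. Qed.

Lemma covers_zdiv_x (s : seq V) : (forall u, u \in s) -> covers_zdiv (map x s).
Proof. by move=> s_all z /x_cover [i E]; exists (x i); rewrite ?map_f. Qed.

Lemma exists_ann_max_above i : exists2 k, ann_sub (x i) (x k) & ann_max (x k).
Proof.
have [k ik kmax] := @finite_preorder_max V (fun i j => ann_sub (x i) (x j))
  (fun i y => id) (fun i j k ij jk y => jk y \o ij y) i.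
exists k => // z z0 kz.
have [y [y0 ky]] := (x_zdiv k).2.
have [j Ej] := x_cover (conj z0 (ex_intro _ y (conj y0 (kz _ ky)))).
have kj : ann_sub (x k) (x j) by move=> t /kz; rewrite (ann_mul0 t Ej).
by rewrite Ej; apply: eq_ann (kmax _ kj) kj.
Qed.

Lemma ann_max_nbrs_sub m u : ann_max (x m) -> u != m -> ~~ zdiv_adj m u ->
  nbrs zdiv_adj u \subset nbrs zdiv_adj m.
Proof.
move=> Mm um nmu; have mu : m != u by rewrite eq_sym.
have um_sub := ann_max_subM Mm (not_zdiv_adj_mul mu nmu).
apply/subsetP => l; rewrite !in_nbrs => /andP [ul /eqP ul0].
rewrite /zdiv_adj (um_sub _ ul0) eqxx andbT.
by apply: contraNneq nmu => ml; rewrite /zdiv_adj eq_sym um ml mulrC ul0 eqxx.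
Qed.

Lemma zdiv_triangle_false m a b : ann_max (x m) -> zdiv_adj m a -> zdiv_adj m b ->
  zdiv_adj a b -> (forall u, u \in [:: m; a; b]) -> False.
Proof.
move=> Mm ma mb ab all3.
have cov : covers_zdiv [:: x m; x a; x b] := covers_zdiv_x all3.
apply: (no_zdiv_triangle Mm (x_neq0 _) (x_neq0 _) (x_neq0 _) cov
  (zdiv_adj_mul0 ma) (zdiv_adj_mul0 mb) (zdiv_adj_mul0 ab));
  by apply: ann_x_neq; rewrite eq_sym; apply: (adj_neq zdiv_adj_irr).
Qed.

Lemma zdiv_square_false m a b w : ann_max (x m) -> a != b ->
  zdiv_adj m a -> zdiv_adj m b -> zdiv_adj a w -> zdiv_adj b w ->
  ~~ zdiv_adj a b -> ~~ zdiv_adj m w -> w != m -> (forall u, u \in [:: m; a; b; w]) -> False.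
Proof.
move=> Mm ab ma mb aw bw nab nmw wm all4.
have mw : x m * x w != 0 by apply: not_zdiv_adj_mul; rewrite // eq_sym.
wlog Ma : a b ab ma mb aw bw nab all4 / ann_max (x a).
  move=> square; have [k ak Mk] := exists_ann_max_above a.
  have am : zdiv_adj a m by rewrite zdiv_adj_sym.
  move: (all4 k); rewrite !inE => /or4P [] /eqP ek; subst k.
  - by rewrite (ak _ (zdiv_adj_mul0 aw)) eqxx in mw.
  - by apply: (square a b).
  - apply: (square b a) => //; first by rewrite eq_sym.
      by rewrite zdiv_adj_sym.
    by move=> u; move: (all4 u); rewrite !inE => /or4P [] ->; rewrite ?orbT.
  - by rewrite mulrC (ak _ (zdiv_adj_mul0 am)) eqxx in mw.
have cov : covers_zdiv [:: x m; x a; x b; x w] := covers_zdiv_x all4.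
apply: (no_zdiv_square_cycle Mm Ma (x_neq0 _) (x_neq0 _) (x_neq0 _) (x_neq0 _) cov
  (zdiv_adj_mul0 ma) (zdiv_adj_mul0 mb) (zdiv_adj_mul0 aw) (zdiv_adj_mul0 bw)
  (not_zdiv_adj_mul ab nab) mw); apply: ann_x_neq => //; rewrite eq_sym //.
exact: (adj_neq zdiv_adj_irr).
Qed.

Lemma ann_classes_not_two_regular (i0 : V) :
  (forall i, #|nbrs zdiv_adj i| = 2%N) -> False.
Proof.
move=> two_reg; have [m _ Mm] := exists_ann_max_above i0.
have /cards2P [a [b [ab nbrs_m]]] : #|nbrs zdiv_adj m| == 2%N by rewrite two_reg.
have ma : zdiv_adj m a by rewrite -in_nbrs nbrs_m !inE eqxx.
have mb : zdiv_adj m b by rewrite -in_nbrs nbrs_m !inE eqxx orbT.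
have := dominated_two_regular zdiv_adj_sym zdiv_adj_irr two_reg nbrs_m
  (fun u => ann_max_nbrs_sub Mm).
case=> [[all3 adj_ab] | [w [all4 [aw bw nab nmw wm]]]].
- exact: zdiv_triangle_false Mm ma mb adj_ab all3.
- exact: zdiv_square_false Mm ab ma mb aw bw nab nmw wm all4.
Qed.
End AnnihilatorClasses.

Lemma GammaE_cycle_family (R : comPzRingType) :
  is_cycle_graph (@GammaE_vertex R) (@GammaE_adj R) ->
  exists n (x : 'I_n -> R), [/\ (2 < n)%N, forall i, zdiv_star (x i),
    forall z, zdiv_star z -> exists i, ann z = ann (x i),
    forall i j, ann (x i) = ann (x j) -> i = j &
    forall i j, cycle_adj i j <-> zdiv_adj x i j].
Proof.
case=> n [n_gt2 [f [f_inj [fV [f_onto f_adj]]]]].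
have [x xP] : exists x : 'I_n -> R, forall i, zdiv_star (x i) /\ f i = eclass (x i).
  exact: (@fin_all_exists _ (fun=> R) (fun i y => zdiv_star y /\ f i = eclass y) fV).
have x_ann_inj i j : ann (x i) = ann (x j) -> i = j.
  by move=> E; apply: f_inj; rewrite (xP i).2 (xP j).2 /eclass E.
exists n, x; split => // [i | z zx | i j].
- by case: (xP i).
- have [i fi] := f_onto _ (ex_intro _ z (conj zx erefl)).
  by exists i; apply: eclass_ann; rewrite -fi (xP i).2.
rewrite -f_adj (xP i).2 (xP j).2 GammaE_adjE /zdiv_adj.
split=> [[neq_ij /eqP ->] | /andP [ij /eqP xij]]; last first.
  by split=> // /x_ann_inj eq_ij; rewrite eq_ij eqxx in ij.
by rewrite andbT; apply: contra_notN neq_ij => /eqP ->.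
Qed.

Theorem proposition1p8 (R : comPzRingType) :
  noetherian R -> ~ is_cycle_graph (@GammaE_vertex R) (@GammaE_adj R).
Proof.
move=> _ /GammaE_cycle_family [n [x [n_gt2 x_zdiv x_cover x_ann_inj x_adj]]].
apply: (ann_classes_not_two_regular x_zdiv x_cover x_ann_inj (Ordinal (ltnW n_gt2))).
exact: card_nbrs_cycle.
Qed.
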